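(* Let $K \ge 1$ be an integer, let $x$ be a sample point, and let $\hat{\pi}(x) = (\hat{\pi}_1(x), \dots, \hat{\pi}_K(x))$ be a probability vector on the classes $[K] = \{1,\dots,K\}$. Let $\hat{\pi}_{(1)}(x) \ge \hat{\pi}_{(2)}(x) \ge \cdots \ge \hat{\pi}_{(K)}(x)$ be its entries sorted in decreasing order, and for $i \in [K]$ let $V(\hat{\pi}(x), i) = \sum_{j=1}^{i} \hat{\pi}_{(j)}(x)$. Define the average non-conformity score $$\bar{V}(\hat{\pi}(x)) = \frac{1}{K}\sum_{i=1}^K V(\hat{\pi}(x), i)$$ and the entropy $H(\hat{\pi}(x)) = -\sum_{k=1}^K \hat{\pi}_k(x)\log \hat{\pi}_k(x)$ (with $0\log 0 = 0$). Then $$\bar{V}(\hat{\pi}(x)) \le \min\big(C_K + 1 - H(\hat{\pi}(x)),\; 1 + H(\hat{\pi}(x))\big),$$ where $C_K = \log\Big(\sum_{k=1}^K \exp\big(-\tfrac{k-1}{K}\big)\Big)$.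
   Context: $V(\hat{\pi}(x), i)$ is the Adaptive Prediction Sets (APS) non-conformity score associated with the $i$-th ranked class: the cumulative sum of the sorted predicted probabilities from the most likely class down to the class of rank $i$. *)

From mathcomp Require Import all_boot all_order all_algebra.
From mathcomp Require Import all_classical all_reals all_analysis.
Set Implicit Arguments. Unset Strict Implicit. Unset Printing Implicit Defensive.
Import Order.TTheory GRing.Theory Num.Theory.
Local Open Scope ring_scope.

Definition prob_vec (R : realType) (K : nat) (p : 'I_K -> R) : Prop :=
  (forall k, 0 <= p k) /\ \sum_(k < K) p k = 1.

Definition sorted_desc (R : realType) (K : nat) (p : 'I_K -> R) : seq R :=
  sort (fun a b : R => b <= a) [seq p k | k <- enum 'I_K].

Definition V (R : realType) (K : nat) (p : 'I_K -> R) (i : nat) : R :=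
  \sum_(0 <= j < i) nth 0 (sorted_desc p) j.

Definition Vbar (R : realType) (K : nat) (p : 'I_K -> R) : R :=
  K%:R^-1 * \sum_(1 <= i < K.+1) V p i.

Definition xlogx (R : realType) (x : R) : R := if x == 0 then 0 else x * ln x.

Definition entropy (R : realType) (K : nat) (p : 'I_K -> R) : R :=
  - \sum_(k < K) xlogx (p k).

Definition C_K (R : realType) (K : nat) : R :=
  ln (\sum_(1 <= k < K.+1) expR (- ((k.-1)%:R / K%:R))).

From mathcomp Require Import all_boot all_order all_algebra.
From mathcomp Require Import all_classical all_reals all_analysis.
From mathcomp Require Import ring lra.
Import Order.TTheory GRing.Theory Num.Theory.
Local Open Scope ring_scope.

(** Writing [q_j] for the [j]-th largest probability (0-based), exchanging the
two sums gives [Vbar = sum_j q_j (1 - j/K)].  Gibbs' variational inequality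
[sum_j q_j a_j + H(q) <= ln (sum_j exp a_j)] with [a_j = -j/K] yields
[Vbar - 1 + H <= C_K], while [Vbar <= 1 <= 1 + H] is immediate. *)

Lemma sum_prefix_sums (V : nmodType) (u : nat -> V) (n : nat) :
  \sum_(1 <= i < n.+1) \sum_(0 <= j < i) u j = \sum_(j < n) u j *+ (n - j).
Proof.
elim: n => [|n IH]; first by rewrite big_geq // big_ord0.
rewrite big_nat_recr //= IH big_mkord !big_ord_recr /= subSnn addrA; congr (_ + _).
by rewrite -big_split; apply: eq_bigr => j _; rewrite subSn 1?ltnW // mulrSr.
Qed.

Lemma xlogx_young (R : realType) (x b : R) :
  0 <= x -> x * b - xlogx x <= expR b - x.
Proof.
rewrite /xlogx le_eqVlt => /predU1P[<-|x_gt0].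
  by rewrite eqxx mul0r !subr0 expR_ge0.
rewrite gt_eqF //.
(* [1 + (b - ln x) <= exp (b - ln x) = exp b / x], multiplied by [x]. *)
have := expR_ge1Dx (b - ln x); rewrite expRD expRN lnK ?posrE // => le_exp.
have := ler_wpM2l (ltW x_gt0) le_exp.
rewrite mulrCA divff ?gt_eqF // mulr1 mulrDr mulr1 mulrBr; lra.
Qed.

Lemma gibbs_variational (R : realType) (I : finType) (q a : I -> R) :
  (forall i, 0 <= q i) -> \sum_i q i = 1 ->
  \sum_i q i * a i - \sum_i xlogx (q i) <= ln (\sum_i expR (a i)).
Proof.
move=> q_ge0 q_sum1; set Z := \sum_i expR (a i).
have [i0 _] : {i0 : I | true}.
  case: (pickP (fun _ : I => true)) => [i0|I0]; first by exists i0.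
  by move: q_sum1; rewrite big_pred0 // => /eqP; rewrite eq_sym oner_eq0.
have Z_gt0 : 0 < Z.
  rewrite /Z (bigD1 i0) //= ltr_pwDl ?expR_gt0 //.
  by apply: sumr_ge0 => i _; exact: expR_ge0.
have sum_exp : \sum_i expR (a i - ln Z) = 1.
  under eq_bigr do rewrite expRD expRN lnK ?posrE //.
  by rewrite -mulr_suml divff ?gt_eqF.
have : \sum_i (q i * (a i - ln Z) - xlogx (q i)) <= \sum_i (expR (a i - ln Z) - q i).
  by apply: ler_sum => i _; exact: xlogx_young.
rewrite !big_split /= !sumrN q_sum1 sum_exp.
under eq_bigr do rewrite mulrBr.
rewrite big_split /= sumrN -mulr_suml q_sum1 mul1r; lra.
Qed.

Lemma xlogx_le0 (R : realType) (x : R) : 0 <= x <= 1 -> xlogx x <= 0.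
Proof.
case/andP=> x_ge0 x_le1; rewrite /xlogx; case: eqP => // /eqP x_neq0.
by rewrite mulr_ge0_le0 // ln_le0.
Qed.

Lemma prob_vec_le1 (R : realType) (K : nat) (p : 'I_K -> R) (k : 'I_K) :
  prob_vec p -> p k <= 1.
Proof.
case=> p_ge0 <-; rewrite (bigD1 k) //= lerDl.
by apply: sumr_ge0 => i _.
Qed.

Lemma entropy_ge0 (R : realType) (K : nat) (p : 'I_K -> R) :
  prob_vec p -> 0 <= entropy p.
Proof.
move=> pp; rewrite /entropy oppr_ge0; apply: sumr_le0 => k _; apply: xlogx_le0.
by rewrite prob_vec_le1 // andbT; case: pp.
Qed.

Lemma C_KE (R : realType) (K : nat) :
  C_K R K = ln (\sum_(j < K) expR (- (j%:R / K%:R))).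
Proof. by rewrite /C_K big_add1 big_mkord. Qed.

Section SortedScores.
Context {R : realType} {K : nat} (p : 'I_K -> R).

Local Notation q j := (nth 0 (sorted_desc p) j).

Lemma size_sorted_desc : size (sorted_desc p) = K.
Proof. by rewrite size_sort size_map size_enum_ord. Qed.

Lemma sum_sorted_desc (f : R -> R) : \sum_(j < K) f (q j) = \sum_(k < K) f (p k).
Proof.
have -> : \sum_(k < K) f (p k) = \sum_(x <- sorted_desc p) f x.
  by rewrite (perm_big _ (permEl (perm_sort _ _))) big_map big_enum.
by rewrite (big_nth 0) size_sorted_desc big_mkord.
Qed.

Lemma sorted_desc_ge0 : (forall k, 0 <= p k) -> forall j, 0 <= q j.
Proof.
move=> p_ge0 j; case: (ltnP j (size (sorted_desc p))) => [j_lt|j_ge].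
  by have := mem_nth 0 j_lt; rewrite mem_sort => /mapP [k _ ->].
by rewrite nth_default.
Qed.

Lemma VbarE : (0 < K)%N -> Vbar p = \sum_(j < K) q j * (1 - j%:R / K%:R).
Proof.
move=> K_gt0; rewrite /Vbar /V sum_prefix_sums mulr_sumr; apply: eq_bigr => j _.
rewrite -[q j *+ _]mulr_natr natrB 1?ltnW //; field.
by rewrite pnatr_eq0 -lt0n.
Qed.

Hypothesis (K_gt0 : (0 < K)%N) (pp : prob_vec p).

Lemma sum_sorted_desc1 : \sum_(j < K) q j = 1.
Proof. by rewrite (sum_sorted_desc id); case: pp. Qed.

Lemma Vbar_le1 : Vbar p <= 1.
Proof.
have q_ge0 := sorted_desc_ge0 (proj1 pp).
rewrite VbarE // -[leRHS]sum_sorted_desc1; apply: ler_sum => j _.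
by rewrite mulrBr mulr1 lerBlDr lerDl mulr_ge0 ?divr_ge0.
Qed.

Lemma Vbar_le_C_K_entropy : Vbar p <= C_K R K + 1 - entropy p.
Proof.
have -> : Vbar p = 1 + \sum_(j < K) q j * - (j%:R / K%:R).
  rewrite VbarE // -[X in X + _]sum_sorted_desc1 -big_split /=.
  by apply: eq_bigr => j _; ring.
rewrite C_KE /entropy -sum_sorted_desc.
have := gibbs_variational _ _ _ (fun j : 'I_K => - (j%:R / K%:R))
  (sorted_desc_ge0 (proj1 pp)) sum_sorted_desc1.
lra.
Qed.

End SortedScores.

Theorem proposition1 (R : realType) (K : nat) (p : 'I_K -> R) :
  (1 <= K)%N -> prob_vec p ->
  Vbar p <= Num.min (C_K R K + 1 - entropy p) (1 + entropy p).
Proof.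
move=> K_gt0 pp; rewrite le_min Vbar_le_C_K_entropy //=.
by rewrite (le_trans (Vbar_le1 p K_gt0 pp)) // lerDl entropy_ge0.
Qed.
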